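(* Consider the job set $J$ described in the context with $n\ge2$ and $p_\ell$ sufficiently large. Let $\sigma=(M_1,M_2)$ be a schedule of $J$ with $\omega_1(\sigma)=1$, $\omega_2(\sigma)=0$ and $\ell\in M_1$. Then $\sigma$ can be improved, by a sequence of improving 3-swaps, to a schedule with $\omega_1=0$ and $\omega_2=1$.
   Context: Two identical machines; a schedule $\sigma=(M_1,M_2)$ partitions the jobs into sets processed on machines 1 and 2, with loads $L_i=\sum_{j\in M_i}p_j$ and makespan $\max_iL_i$. Fix $n$ and the job set $J=\{a_i,b_i,c_i:1\le i\le n\}\cup\{\ell\}$ with $p_{a_i}=2^{n+i+1}+2^{i-1}$, $p_{b_i}=2^{n+i}$, $p_{c_i}=2^{n+i-1}+2^{i-1}$, and $p_\ell$ a sufficiently large number. For each $i$ define $\omega_i(\sigma)=0$ if $a_i\in M_1$ and $b_i,c_i\in M_2$; $\omega_i(\sigma)=1$ if $a_i\in M_2$ and $b_i,c_i\in M_1$; and $\omega_i(\sigma)=-1$ otherwise. A 3-swap interchanges the machine assignments of exactly three jobs (some on each machine); it is improving if the makespan strictly decreases. *)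

From mathcomp Require Import all_boot all_order all_algebra.
Set Implicit Arguments. Unset Strict Implicit. Unset Printing Implicit Defensive.

(* Jobs of the instance J: [Some (k, t)] with k : 'I_n stands for the job
   with (1-based) index i = k+1 of kind t (t = 0 : a_i, t = 1 : b_i,
   t = 2 : c_i); [None] is the long job l. *)
Definition job (n : nat) : finType := option ('I_n * 'I_3).

Definition ja {n} (k : 'I_n) : job n := Some (k, 0%R).
Definition jb {n} (k : 'I_n) : job n := Some (k, inord 1).
Definition jc {n} (k : 'I_n) : job n := Some (k, inord 2).
Definition jl {n} : job n := None.

Definition ptime (n pl : nat) (j : job n) : nat :=
  match j with
  | None => pl
  | Some (k, t) =>
      let i := k.+1 in
      if val t == 0 then 2 ^ (n + i + 1) + 2 ^ (i - 1)
      else if val t == 1 then 2 ^ (n + i)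
      else 2 ^ (n + i - 1) + 2 ^ (i - 1)
  end.

(* A schedule is represented by the set M1 of jobs on machine 1;
   machine 2 gets the complement M2 = ~: M1. *)
Definition schedule (n : nat) := {set job n}.

Definition load1 (n pl : nat) (M1 : schedule n) : nat :=
  \sum_(j in M1) ptime pl j.
Definition load2 (n pl : nat) (M1 : schedule n) : nat :=
  \sum_(j in ~: M1) ptime pl j.
Definition makespan (n pl : nat) (M1 : schedule n) : nat :=
  maxn (load1 pl M1) (load2 pl M1).

Definition omega (n : nat) (M1 : schedule n) (k : 'I_n) : int :=
  if [&& ja k \in M1, jb k \notin M1 & jc k \notin M1] then 0%R
  else if [&& ja k \notin M1, jb k \in M1 & jc k \in M1] then 1%R
  else (-1)%R.

Definition three_swap (n : nat) (M1 M1' : schedule n) : Prop :=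
  exists S : {set job n},
    [/\ #|S| = 3, S :&: M1 != set0, S :\: M1 != set0 &
        M1' = (M1 :\: S) :|: (S :\: M1)].

Definition improving_three_swap (n pl : nat) (M1 M1' : schedule n) : Prop :=
  three_swap M1 M1' /\ makespan pl M1' < makespan pl M1.

Inductive improves_to (n pl : nat) : schedule n -> schedule n -> Prop :=
| improves_refl M : improves_to pl M M
| improves_step M M' M'' :
    improving_three_swap pl M M' -> improves_to pl M' M'' ->
    improves_to pl M M''.

(* omega_i for a 1-based index i (1 <= i <= n); out-of-range indices,
   which are never used, get the value -1. *)
Definition omega_at (n : nat) (M1 : schedule n) (i : nat) : int :=
  if @insub nat (fun m => m < n) 'I_n i.-1 is Some k then omega M1 k
  else (-1)%R.

From mathcomp Require Import all_boot all_order all_algebra.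
From mathcomp Require Import zify.
Set Implicit Arguments. Unset Strict Implicit. Unset Printing Implicit Defensive.

(* Once p_l is at least the total processing time of the other jobs, the
   machine holding l carries the makespan, so a 3-swap is improving as soon as
   it lowers the load of that machine.  If omega_i = 1 and omega_(i+1) = 0,
   exchanging a_(i+1) (machine 1) for a_i and b_(i+1) lowers L_1 by 2^(i-1);
   then exchanging b_i and c_i (machine 1) for c_(i+1) lowers it by
   2^(n+i-1) - 2^(i-1) > 0, and leaves omega_i = 0, omega_(i+1) = 1.  The
   theorem is the case i = 1. *)

Section SwapSet.
Variable T : finType.
Implicit Types (S M : {set T}) (s : seq T).

Definition swap_set S M : {set T} := (M :\: S) :|: (S :\: M).

Lemma in_swap_set S M x : (x \in swap_set S M) = (x \in S) (+) (x \in M).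
Proof. by rewrite !inE; case: (x \in S); case: (x \in M). Qed.

Lemma big_swap_set (R : Type) (idx : R) (op : Monoid.com_law idx) S M F :
  op (\big[op/idx]_(j in swap_set S M) F j) (\big[op/idx]_(j in S :&: M) F j) =
  op (\big[op/idx]_(j in M) F j) (\big[op/idx]_(j in S :\: M) F j).
Proof.
have swapIM : swap_set S M :&: M = M :\: S.
  by apply/setP => x; rewrite !inE; case: (x \in S); case: (x \in M).
have swapDM : swap_set S M :\: M = S :\: M.
  by apply/setP => x; rewrite !inE; case: (x \in S); case: (x \in M).
rewrite (@big_setID _ _ _ _ (swap_set S M) M) swapIM swapDM.
rewrite (@big_setID _ _ _ _ M S) setIC.
by rewrite Monoid.mulmAC; congr (op _ _); apply: Monoid.mulmC.
Qed.

Lemma big_seq_setI (R : Type) (idx : R) (op : Monoid.com_law idx) s M F :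
  uniq s ->
  \big[op/idx]_(j in [set:: s] :&: M) F j = \big[op/idx]_(j <- s | j \in M) F j.
Proof.
move=> uniq_s; rewrite -[RHS]big_filter big_uniq ?filter_uniq //.
by apply: eq_bigl => x; rewrite !inE mem_filter andbC.
Qed.

End SwapSet.

Section Jobs.
Variable n : nat.
Implicit Types (k : 'I_n) (M : schedule n) (s : seq (job n)).

Lemma ptime_ja pl k : ptime pl (ja k) = 2 ^ (n + k.+2) + 2 ^ k.
Proof. by rewrite /ptime /= subn1 addn1 !addnS. Qed.

Lemma ptime_jb pl k : ptime pl (jb k) = 2 ^ (n + k.+1).
Proof. by rewrite /ptime /= inordK. Qed.

Lemma ptime_jc pl k : ptime pl (jc k) = 2 ^ (n + k) + 2 ^ k.
Proof. by rewrite /ptime /= inordK //; congr (2 ^ _ + 2 ^ _); lia. Qed.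

Definition job_code (j : job n) : nat * nat :=
  if j is Some (k, t) then (val k, val t) else (0, 3).

Lemma job_code_inj : injective job_code.
Proof.
move=> [[k t]|] [[k' t']|] //= [].
- by move=> /ord_inj-> /ord_inj->.
- by move=> _ ht; move: (ltn_ord t); rewrite ht.
- by move=> _ ht; move: (ltn_ord t'); rewrite -ht.
Qed.

Lemma job_eqE (j j' : job n) : (j == j') = (job_code j == job_code j').
Proof. by rewrite (inj_eq job_code_inj). Qed.

Lemma job_code_ja k : job_code (ja k) = (val k, 0).
Proof. by []. Qed.

Lemma job_code_jb k : job_code (jb k) = (val k, 1).
Proof. by rewrite /= inordK. Qed.

Lemma job_code_jc k : job_code (jc k) = (val k, 2).
Proof. by rewrite /= inordK. Qed.

Lemma job_code_jl : job_code jl = (0, 3).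
Proof. by []. Qed.

Definition job_codeE := (job_code_ja, job_code_jb, job_code_jc, job_code_jl).

Lemma omega_atE M k : omega_at M k.+1 = omega M k.
Proof.
rewrite /omega_at /=; case: insubP => [k' _ /val_inj-> //|].
by rewrite ltn_ord.
Qed.

Lemma omega_eq0 M k :
  (omega M k == 0%R) = [&& ja k \in M, jb k \notin M & jc k \notin M].
Proof.
by rewrite /omega; case: (ja k \in M); case: (jb k \in M); case: (jc k \in M).
Qed.

Lemma omega_eq1 M k :
  (omega M k == 1%R) = [&& ja k \notin M, jb k \in M & jc k \in M].
Proof.
by rewrite /omega; case: (ja k \in M); case: (jb k \in M); case: (jc k \in M).
Qed.

Definition short_load : nat := \sum_(j : job n | j != jl) ptime 0 j.

Lemma makespan_load1 pl M :
  short_load <= pl -> jl \in M -> makespan pl M = load1 pl M.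
Proof.
move=> hpl hl; apply/maxn_idPl.
have load2_le : load2 pl M <= short_load.
  have ptime_short (j : job n) : j != jl -> ptime 0 j = ptime pl j by case: j.
  rewrite /load2 /short_load (eq_bigr _ ptime_short).
  apply: (sub_le_big leqnn (fun x y => leq_addr y x)) => j.
  by rewrite inE; apply: contraNneq => ->.
have pl_le : pl <= load1 pl M by rewrite /load1 (big_setD1 _ hl) leq_addr.
exact: leq_trans load2_le (leq_trans hpl pl_le).
Qed.

Lemma load1_swap_set pl M s : uniq s ->
  load1 pl (swap_set [set:: s] M) + \sum_(j <- s | j \in M) ptime pl j =
  load1 pl M + \sum_(j <- s | j \notin M) ptime pl j.
Proof.
move=> uniq_s; rewrite /load1 -[\sum_(j <- s | j \in M) _]big_seq_setI //.
rewrite [\sum_(j <- s | j \notin M) _](eq_bigl (fun j => j \in ~: M)) => [|j];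
  last by rewrite inE.
by rewrite -[\sum_(j <- s | _) _]big_seq_setI // -setDE big_swap_set.
Qed.

Lemma improving_swap_set pl M s :
  short_load <= pl -> jl \in M -> jl \notin s -> uniq s -> size s = 3 ->
  has (fun j => j \in M) s -> has (fun j => j \notin M) s ->
  \sum_(j <- s | j \notin M) ptime pl j < \sum_(j <- s | j \in M) ptime pl j ->
  improving_three_swap pl M (swap_set [set:: s] M).
Proof.
move=> hpl hl l_notin_s uniq_s size_s /hasP[x xs xM] /hasP[y ys yM] lt_sum.
split.
- exists [set:: s]; split=> //.
  + by rewrite cardsE -size_s; apply/card_uniqP.
  + by apply/set0Pn; exists x; rewrite !inE xs xM.
  + by apply/set0Pn; exists y; rewrite !inE ys yM.
- have hl' : jl \in swap_set [set:: s] M.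
    by rewrite in_swap_set inE (negbTE l_notin_s) hl.
  rewrite !makespan_load1 //; have := load1_swap_set pl M uniq_s; lia.
Qed.

Lemma ptime_ja_jb_lt pl k k' : val k' = k.+1 ->
  ptime pl (ja k) + ptime pl (jb k') < ptime pl (ja k').
Proof.
move=> hk; rewrite !ptime_ja ptime_jb hk !addnS !expnS.
have : 0 < 2 ^ k by rewrite expn_gt0.
lia.
Qed.

Lemma ptime_jc_lt pl k k' : val k' = k.+1 ->
  ptime pl (jc k') < ptime pl (jb k) + ptime pl (jc k).
Proof.
move=> hk; rewrite !ptime_jc ptime_jb hk !addnS !expnS.
have : 2 ^ k < 2 ^ (n + k).
  by rewrite ltn_exp2l //; have := ltn_ord k; lia.
lia.
Qed.

Lemma omega_exchange pl M k k' :
  val k' = k.+1 -> short_load <= pl -> jl \in M ->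
  omega M k = 1%R -> omega M k' = 0%R ->
  exists M', [/\ improves_to pl M M', omega M' k = 0%R & omega M' k' = 1%R].
Proof.
move=> hk hpl hl /eqP; rewrite omega_eq1 => /and3P[/negbTE aM bM cM].
move=> /eqP; rewrite omega_eq0 => /and3P[a'M /negbTE b'M /negbTE c'M].
have kk' : (val k == val k') = false by rewrite hk ltn_eqF.
have k'k : (val k' == val k) = false by rewrite eq_sym.
pose memE := (in_swap_set, inE, job_eqE, job_codeE, xpair_eqE, kk', k'k,
              aM, bM, cM, a'M, b'M, c'M, eqxx, andbF, andbT).
pose M2 := swap_set [set:: [:: ja k'; ja k; jb k']] M.
pose M3 := swap_set [set:: [:: jb k; jc k; jc k']] M2.
exists M3; split.
- apply: (@improves_step _ _ _ M2); first apply: improving_swap_set => //.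
  + by rewrite /= !memE.
  + by rewrite /= !memE.
  + by rewrite /= !memE.
  + have := ptime_ja_jb_lt pl hk.
    by rewrite !big_cons big_nil !memE !ptime_ja ptime_jb /=; lia.
  apply: (@improves_step _ _ _ M3); last exact: improves_refl.
  apply: improving_swap_set => //.
  + by rewrite !memE.
  + by rewrite /= !memE.
  + by rewrite /= !memE.
  + by rewrite /= !memE.
  + have := ptime_jc_lt pl hk.
    by rewrite !big_cons big_nil !memE !ptime_jc ptime_jb /=; lia.
- by apply/eqP; rewrite omega_eq0 !memE.
- by apply/eqP; rewrite omega_eq1 !memE.
Qed.

End Jobs.

Theorem lemma8 (n : nat) (hn : 2 <= n) :
  exists P : nat, forall pl : nat, P <= pl ->
  forall M1 : schedule n,
    omega_at M1 1 = 1%R -> omega_at M1 2 = 0%R -> jl \in M1 ->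
    exists M1' : schedule n,
      [/\ improves_to pl M1 M1', omega_at M1' 1 = 0%R
        & omega_at M1' 2 = 1%R].
Proof.
exists (short_load n) => pl hpl M1 omega1 omega2 hl.
pose k1 : 'I_n := Ordinal (ltnW hn).
pose k2 : 'I_n := Ordinal hn.
have := @omega_exchange n pl M1 k1 k2 erefl hpl hl.
rewrite -!omega_atE => /(_ omega1 omega2) [M' [improves omega1' omega2']].
by exists M'; split; [| rewrite (omega_atE M' k1) | rewrite (omega_atE M' k2)].
Qed.
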